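(* Let $\tau>1$, let $\kappa\ge3$ be an integer and let $x^\dagger\in\mathcal X$ satisfy $\bar k^\delta_{\mathrm{pr}}(x^\dagger)\ge\kappa$. Then on the event $\Omega_\kappa$ one has $k^\delta_{\mathrm{pr}}(x^\dagger)<\infty$ and $$k^\delta_{\mathrm{dp}}\le A_\tau\,k^\delta_{\mathrm{pr}}(x^\dagger),\qquad A_\tau:=\Big(\frac{\tau+1}{\tau-1}\Big)^2;$$ in particular $k^\delta_{\mathrm{dp}}<\infty$ on $\Omega_\kappa$.
   Context: Setting: $K:\mathcal X\to\mathcal Y$ compact injective with dense range between infinite-dimensional real separable Hilbert spaces, singular system $(\sigma_j,v_j,u_j)$ ($(v_j),(u_j)$ orthonormal bases, $\sigma_1\ge\sigma_2\ge\dots>0$, $Kv_j=\sigma_ju_j$, $K^*u_j=\sigma_jv_j$); $y^\dagger=Kx^\dagger$, $\delta>0$, data $(y^\delta,u_j):=(y^\dagger,u_j)+\delta(Z,u_j)$ with real random variables $(Z,u_j)$. For $m\in\mathbb N$: $k^\delta_{\mathrm{dp}}(m):=\min\{k\in\{0,\dots,m\}:\sqrt{\sum_{j=k+1}^m(y^\delta,u_j)^2}\le\tau\sqrt m\,\delta\}$, $k^\delta_{\mathrm{dp}}:=\sup_{m\in\mathbb N}k^\delta_{\mathrm{dp}}(m)$. With $\min\emptyset=\infty$: $k^\delta_{\mathrm{pr}}(x^\dagger):=\min\{k\in\mathbb N_0:\sum_{j=1}^k(y^\delta-y^\dagger,u_j)^2\ge\sum_{j=k+1}^\infty(y^\dagger,u_j)^2\}$,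 $\bar k^\delta_{\mathrm{pr}}(x^\dagger):=\min\{k\in\mathbb N_0:\delta^2k\ge\sum_{j=k+1}^\infty(y^\dagger,u_j)^2\}$. With $\varepsilon_\tau:=\min\big(\frac{(\tau+1)^2}{4}-1,\frac13\big)$, $$\Omega_\kappa:=\Big\{\Big|\sum_{j=1}^m(y^\delta-y^\dagger,u_j)^2-m\delta^2\Big|\le\varepsilon_\tau m\delta^2\ \text{for all integers } m\ge\kappa/3\Big\}.$$ *)

(* Coefficient model of the singular-system setting:
   all sequences are indexed 1-based (index 0 is ignored).
   For x in X write xc j := (x, v_j); then (Kx, u_j) = sigma_j * xc j.
   z j := (Z, u_j)(omega) is one realization of the noise. *)
From HB Require Import structures.
From mathcomp Require Import all_boot all_order all_algebra.
From mathcomp Require Import all_classical all_reals all_analysis.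
Set Implicit Arguments. Unset Strict Implicit. Unset Printing Implicit Defensive.
Import Order.TTheory GRing.Theory Num.Theory.
Local Open Scope ring_scope.
Local Open Scope classical_set_scope.

Section Defs.
Context {R : realType}.

Definition ydag (sigma xc : nat -> R) (j : nat) : R := sigma j * xc j.

Definition ydelta (sigma xc : nat -> R) (delta : R) (z : nat -> R) (j : nat) : R :=
  ydag sigma xc j + delta * z j.

(* k_dp(m) = min { k in {0..m} : sqrt(sum_{j=k+1}^m y_j^2) <= tau sqrt(m) delta };
   k = m always qualifies; find over iota 0 m.+1 returns the least such k. *)
Definition kdp_m (y : nat -> R) (tau delta : R) (m : nat) : nat :=
  find (fun k => Num.sqrt (\sum_(k.+1 <= j < m.+1) y j ^+ 2)
                 <= tau * Num.sqrt m%:R * delta) (iota 0 m.+1).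

Definition kdp (y : nat -> R) (tau delta : R) : \bar R :=
  ereal_sup [set ((kdp_m y tau delta m)%:R)%:E | m in [set m : nat | (1 <= m)%N]].

Definition tail (b : nat -> R) (k : nat) : \bar R :=
  (\sum_(k.+1 <= j <oo) ((b j) ^+ 2)%:E)%E.

(* k_pr(x^dagger) = min {k : sum_{j=1}^k (y^delta - y^dagger, u_j)^2 >= tail}, min set0 = +oo *)
Definition kpr (sigma xc : nat -> R) (delta : R) (z : nat -> R) : \bar R :=
  ereal_inf [set (k%:R)%:E | k in
    [set k : nat | (tail (ydag sigma xc) k <= (\sum_(1 <= j < k.+1) (delta * z j) ^+ 2)%:E)%E]].

Definition kpr_bar (sigma xc : nat -> R) (delta : R) : \bar R :=
  ereal_inf [set (k%:R)%:E | k in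
    [set k : nat | (tail (ydag sigma xc) k <= (delta ^+ 2 * k%:R)%:E)%E]].

Definition eps_tau (tau : R) : R := Num.min ((tau + 1) ^+ 2 / 4 - 1) (3%:R^-1).

Definition Omega (tau delta : R) (kappa : nat) (z : nat -> R) : Prop :=
  forall m : nat, (kappa%:R / 3%:R : R) <= m%:R ->
    `|(\sum_(1 <= j < m.+1) (delta * z j) ^+ 2 - m%:R * delta ^+ 2 : R)|
      <= eps_tau tau * m%:R * delta ^+ 2.

Definition A_tau (tau : R) : R := ((tau + 1) / (tau - 1)) ^+ 2.

End Defs.

From HB Require Import structures.
From mathcomp Require Import all_boot all_order all_algebra.
From mathcomp Require Import all_classical all_reals all_analysis.
From mathcomp Require Import zify ring lra.
Set Implicit Arguments. Unset Strict Implicit. Unset Printing Implicit Defensive.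
Import Order.TTheory GRing.Theory Num.Theory numFieldNormedType.Exports.
Local Open Scope ring_scope.
Local Open Scope classical_set_scope.

(* Write b_j = (y^dagger, u_j), e_j = delta (Z, u_j) and N(k) = sum_{1<=j<=k} e_j^2.
   On Omega_kappa the noise energy is controlled from both sides,
   (1 - eps) m delta^2 <= N(m) <= (1 + eps) m delta^2 whenever 3 m >= kappa,
   where eps = eps_tau satisfies 0 <= eps <= 1/3 and 1 + eps <= (tau+1)^2/4.
   1. k_pr is finite: the tail sum_{j>k} b_j^2 stays below tail(0) < oo (sigma
      is bounded and x^dagger is square summable) while N(k) grows linearly in k,
      so some k satisfies tail(k) <= N(k); k_pr is the least one, ks.
   2. 3 ks >= kappa: otherwise, with m = ceil(kappa/3),
      tail(kappa-1) <= tail(ks) <= N(ks) <= N(m) <= (4/3) m delta^2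
                    <= (kappa-1) delta^2,
      i.e. bar k_pr <= kappa - 1, a contradiction.
   3. If m >= A_tau ks, Young's inequality with weight r = (tau-1)/(tau+1) splits
      the residual sum_{ks<j<=m} (b_j + e_j)^2 into the tail (<= N(ks)) and the noise
      (<= N(m)); both are bounded via Omega_kappa and ks <= r^2 m, which gives
      residual <= (1+eps)(1+r)^2 m delta^2 <= tau^2 m delta^2, hence k_dp(m) <= ks.
      If m < A_tau ks, simply k_dp(m) <= m.  Thus k_dp <= A_tau ks. *)

Section GenericFacts.
Context {R : realType}.

Lemma kdp_m_le (y : nat -> R) (tau delta : R) (m k : nat) : (k <= m)%N ->
  Num.sqrt (\sum_(k.+1 <= j < m.+1) y j ^+ 2) <= tau * Num.sqrt m%:R * delta ->
  (kdp_m y tau delta m <= k)%N.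
Proof.
move=> km adm_k; rewrite leqNgt; apply/negP => lt_k.
by have := before_find 0%N lt_k; rewrite nth_iota ?add0n ?ltnS // adm_k.
Qed.

Lemma kdp_m_le_m (y : nat -> R) (tau delta : R) (m : nat) :
  0 <= tau * Num.sqrt m%:R * delta -> (kdp_m y tau delta m <= m)%N.
Proof. by move=> thr_ge0; apply: kdp_m_le => //; rewrite big_geq // sqrtr0. Qed.

Lemma sumsq_widen (e : nat -> R) (a b c d : nat) : (c <= a)%N -> (b <= d)%N ->
  \sum_(a <= j < b) e j ^+ 2 <= \sum_(c <= j < d) e j ^+ 2.
Proof.
move=> ca bd; have sq_ge0 i j : 0 <= \sum_(i <= l < j) e l ^+ 2.
  by apply: sumr_ge0 => l _; exact: sqr_ge0.
have [ba|ab] := leqP b a; first by rewrite big_geq.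
have ad : (a <= d)%N by rewrite ltnW // (leq_trans ab).
rewrite (big_cat_nat ca ad) (big_cat_nat (ltnW ab) bd) /=.
by have := sq_ge0 c a; have := sq_ge0 b d; lra.
Qed.

Lemma tail_mono (b : nat -> R) (k k' : nat) : (k <= k')%N ->
  (tail b k' <= tail b k)%E.
Proof.
move=> kk'; rewrite /tail (@nneseries_split _ _ k.+1 (k' - k)%N); last first.
  by move=> j _; rewrite lee_fin sqr_ge0.
rewrite (_ : (k.+1 + (k' - k) = k'.+1)%N); last by lia.
by apply: leeDr; apply: sume_ge0 => j _; rewrite lee_fin sqr_ge0.
Qed.

Lemma sumsq_le_tail (b : nat -> R) (k m : nat) :
  ((\sum_(k.+1 <= j < m) b j ^+ 2)%:E <= tail b k)%E.
Proof.
by rewrite /tail -sumEFin; apply: nneseries_lim_ge => j _ _; rewrite lee_fin sqr_ge0.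
Qed.

Lemma ereal_inf_nat_min (P : set nat) (k : nat) : P k ->
  (forall k', P k' -> (k <= k')%N) ->
  ereal_inf [set (n%:R)%:E | n in P] = (k%:R)%:E :> \bar R.
Proof.
move=> Pk k_min; apply/le_anti/andP; split; first by apply: ereal_inf_lbound; exists k.
by apply/ereal_infP => _ [n Pn <-]; rewrite lee_fin ler_nat k_min.
Qed.

Lemma young_sqr (r b e : R) : 0 < r ->
  (b + e) ^+ 2 <= (1 + r^-1) * b ^+ 2 + (1 + r) * e ^+ 2.
Proof.
move=> r_gt0; rewrite -subr_ge0 -(pmulr_rge0 _ r_gt0).
have -> : r * ((1 + r^-1) * b ^+ 2 + (1 + r) * e ^+ 2 - (b + e) ^+ 2)
   = (b - r * e) ^+ 2 by field; rewrite gt_eqF.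
exact: sqr_ge0.
Qed.

(* m = ceil(kappa/3), used in step 2: 3 m >= kappa, yet (4/3) m <= kappa - 1. *)
Lemma third_ceil_choice (kappa k : nat) : (3 <= kappa)%N -> (3 * k < kappa)%N ->
  exists m, [/\ (kappa <= 3 * m)%N, (4 * m + 4 <= 3 * kappa)%N & (k <= m)%N].
Proof.
move=> kappa_ge3 k_small; exists ((kappa + 2) %/ 3)%N.
have := divn_eq (kappa + 2) 3; have := @ltn_pmod (kappa + 2) 3 isT.
by move: ((kappa + 2) %/ 3)%N ((kappa + 2) %% 3)%N => q rm rm_lt kappa_eq; split; lia.
Qed.

Lemma eps_tau_bounds (tau : R) : 1 < tau ->
  [/\ 0 <= eps_tau tau, eps_tau tau <= 3%:R^-1
    & 1 + eps_tau tau <= (tau + 1) ^+ 2 / 4].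
Proof.
move=> tau_gt1; rewrite /eps_tau; set eps := Num.min _ _.
have eps_le1 : eps <= (tau + 1) ^+ 2 / 4 - 1 by rewrite ge_min lexx.
have eps_le3 : eps <= 3%:R^-1 by rewrite ge_min lexx orbT.
split=> //; last by lra.
rewrite le_min invr_ge0 ler0n andbT subr_ge0 ler_pdivlMr //; nra.
Qed.

(* The Young weight r = (tau-1)/(tau+1) balancing tail and noise in step 3. *)
Definition young_weight (tau : R) : R := (tau - 1) / (tau + 1).

Lemma young_weight_identities (tau : R) : 1 < tau ->
  [/\ 0 < young_weight tau, A_tau tau * young_weight tau ^+ 2 = 1
    & (tau + 1) ^+ 2 / 4 * (1 + young_weight tau) ^+ 2 = tau ^+ 2].
Proof.
move=> tau_gt1; have tm : 0 < tau - 1 by rewrite subr_gt0.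
have tp : 0 < tau + 1 by lra.
rewrite /young_weight /A_tau; split; first by rewrite divr_gt0.
  by field; rewrite !gt_eqF.
by field; rewrite gt_eqF.
Qed.

Lemma A_tau_ge1 (tau : R) : 1 < tau -> 1 <= A_tau tau.
Proof.
move=> tau_gt1; have tm : 0 < tau - 1 by rewrite subr_gt0.
have q_ge1 : 1 <= (tau + 1) / (tau - 1) by rewrite ler_pdivlMr // mul1r; lra.
by rewrite /A_tau; move: ((tau + 1) / (tau - 1)) q_ge1 => q; nra.
Qed.

(* The coefficients of y^dagger have a finite tail: sigma is bounded (it is positive
   and nonincreasing from j = 1 on) and x^dagger is square summable. *)
Lemma tail_ydag_bounded (sigma xc : nat -> R) :
  (forall j, (1 <= j)%N -> 0 < sigma j) ->
  (forall j, (1 <= j)%N -> sigma j.+1 <= sigma j) ->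
  (\sum_(1 <= j <oo) ((xc j) ^+ 2)%:E < +oo)%E ->
  exists C : R, (tail (ydag sigma xc) 0 <= C%:E)%E.
Proof.
move=> sigma_gt0 sigma_noninc xc_fin.
have sigma_le1 j : (1 <= j)%N -> sigma j <= sigma 1%N.
  elim: j => [//|[|j] IHj] _ //; exact: le_trans (sigma_noninc j.+1 isT) (IHj isT).
pose c := sigma 0%N ^+ 2 + sigma 1%N ^+ 2.
have xc_num : (\sum_(1 <= j <oo) ((xc j) ^+ 2)%:E)%E \is a fin_num.
  by rewrite ge0_fin_numE //; apply: nneseries_ge0 => j _ _; rewrite lee_fin sqr_ge0.
exists (c * fine (\sum_(1 <= j <oo) ((xc j) ^+ 2)%:E)%E).
rewrite EFinM fineK // -nneseriesZl; last by move=> j _; rewrite lee_fin sqr_ge0.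
apply: lee_nneseries => [j _ _|j _]; first by rewrite lee_fin sqr_ge0.
rewrite lee_fin /ydag exprMn ler_wpM2r ?sqr_ge0 //.
case: j => [|j]; first by rewrite /c lerDl sqr_ge0.
have s_ge0 := ltW (sigma_gt0 j.+1 isT); have s_le := sigma_le1 j.+1 isT.
have : sigma j.+1 ^+ 2 <= sigma 1%N ^+ 2 by nra.
by have := sqr_ge0 (sigma 0%N); rewrite /c; lra.
Qed.

End GenericFacts.

Section OneRealization.
Context {R : realType}.
Variables (sigma xc z : nat -> R) (delta tau : R) (kappa : nat).
Hypotheses (delta_gt0 : 0 < delta) (tau_gt1 : 1 < tau) (kappa_ge3 : (3 <= kappa)%N).
Hypothesis kappa_le_kpr_bar : ((kappa%:R)%:E <= kpr_bar sigma xc delta)%E.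
Hypothesis on_Omega : Omega tau delta kappa z.

Let b := ydag sigma xc.
Local Notation r := (young_weight tau).

Definition noise_energy (k : nat) : R := \sum_(1 <= j < k.+1) (delta * z j) ^+ 2.

Lemma noise_energy_mono (k m : nat) : (k <= m)%N -> noise_energy k <= noise_energy m.
Proof. by move=> km; apply: sumsq_widen. Qed.

Lemma noise_energy_bounds (m : nat) : (kappa <= 3 * m)%N ->
  (1 - eps_tau tau) * m%:R * delta ^+ 2 <= noise_energy m
    <= (1 + eps_tau tau) * m%:R * delta ^+ 2.
Proof.
move=> km; have : kappa%:R / 3%:R <= m%:R :> R.
  by rewrite ler_pdivrMr // -natrM ler_nat mulnC.
move/on_Omega; rewrite ler_norml => /andP[lo hi].
by rewrite /noise_energy !mulrBl !mulrDl !mul1r; apply/andP; split; lra.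
Qed.

Lemma kpr_bar_lbound (k : nat) :
  (tail b k <= (delta ^+ 2 * k%:R)%:E)%E -> (kappa <= k)%N.
Proof.
move=> tail_k; have : (kpr_bar sigma xc delta <= (k%:R)%:E)%E.
  by apply: ereal_inf_lbound; exists k.
by move/(le_trans kappa_le_kpr_bar); rewrite lee_fin ler_nat.
Qed.

(* Step 1: a bounded tail is eventually dominated by the linearly growing N(k). *)
Lemma tail_below_noise_exists (C : R) : (tail b 0 <= C%:E)%E ->
  exists k, (tail b k <= (noise_energy k)%:E)%E.
Proof.
move=> tail0_le; have [eps_ge0 eps_le3 _] := eps_tau_bounds tau_gt1.
have D_gt0 : 0 < delta ^+ 2 by rewrite exprn_gt0.
pose X := 3%:R * C / (2%:R * delta ^+ 2).
pose k := maxn kappa (Num.truncn X).+1.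
exists k; apply: le_trans (tail_mono b (leq0n k)) _; apply: le_trans tail0_le _.
have X_lt : X < k%:R by apply: lt_le_trans (truncnS_gt X) _; rewrite ler_nat leq_maxr.
have C_eq : C = X * (2%:R * delta ^+ 2 / 3%:R) by rewrite /X; field; rewrite gt_eqF.
have C_le : C <= k%:R * (2%:R * delta ^+ 2 / 3%:R).
  by rewrite C_eq ler_wpM2r // ?ltW // divr_gt0 ?mulr_gt0.
have k3 : (kappa <= 3 * k)%N.
  by rewrite (leq_trans (leq_maxl kappa (Num.truncn X).+1)) // leq_pmull.
have /andP[N_lo _] := noise_energy_bounds k3.
rewrite lee_fin; apply: le_trans N_lo; apply: le_trans C_le _.
have kD_ge0 : 0 <= k%:R * delta ^+ 2 by rewrite mulr_ge0 // sqr_ge0.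
have : 0 <= (3%:R^-1 - eps_tau tau) * (k%:R * delta ^+ 2).
  by rewrite mulr_ge0 ?subr_ge0.
by rewrite -mulrA; lra.
Qed.

Lemma oracle_index_large (ks : nat) : (tail b ks <= (noise_energy ks)%:E)%E ->
  (kappa <= 3 * ks)%N.
Proof.
move=> tail_ks; rewrite leqNgt; apply/negP => ks_small.
have [m [km m_small ksm]] := third_ceil_choice kappa_ge3 ks_small.
have [_ eps_le3 _] := eps_tau_bounds tau_gt1.
suff : (kappa <= kappa.-1)%N by case: (kappa) kappa_ge3 => [|[|n]] //; rewrite ltnn.
have ks_le : (ks <= kappa.-1)%N by lia.
apply: kpr_bar_lbound; apply: le_trans (tail_mono b ks_le) _.
apply: le_trans tail_ks _; rewrite lee_fin.
apply: le_trans (noise_energy_mono ksm) _.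
have /andP[_ N_hi] := noise_energy_bounds km; apply: le_trans N_hi _.
have m_le : 4 * m%:R <= 3%:R * (kappa.-1)%:R :> R.
  by rewrite -!natrM ler_nat; lia.
have D_ge0 := sqr_ge0 delta.
have : 0 <= (3%:R^-1 - eps_tau tau) * (m%:R * delta ^+ 2).
  by rewrite mulr_ge0 ?subr_ge0 // mulr_ge0.
have : 0 <= (3%:R * (kappa.-1)%:R - 4 * m%:R) * delta ^+ 2.
  by rewrite mulr_ge0 // subr_ge0.
by rewrite [delta ^+ 2 * _]mulrC; lra.
Qed.

Lemma residual_below_threshold (ks m : nat) :
  (tail b ks <= (noise_energy ks)%:E)%E -> (kappa <= 3 * ks)%N -> (ks <= m)%N ->
  ks%:R <= r ^+ 2 * m%:R ->
  \sum_(ks.+1 <= j < m.+1) ydelta sigma xc delta z j ^+ 2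
    <= (tau * delta) ^+ 2 * m%:R.
Proof.
move=> tail_ks ks3 ksm ks_le.
have [eps_ge0 _ eps_le] := eps_tau_bounds tau_gt1.
have [r_gt0 _ r_id] := young_weight_identities tau_gt1.
set E := 1 + eps_tau tau; set D := delta ^+ 2; set M := m%:R.
have D_ge0 : 0 <= D := sqr_ge0 delta.
pose Sb := \sum_(ks.+1 <= j < m.+1) b j ^+ 2.
pose Se := \sum_(ks.+1 <= j < m.+1) (delta * z j) ^+ 2.
have young_split : \sum_(ks.+1 <= j < m.+1) ydelta sigma xc delta z j ^+ 2
    <= (1 + r^-1) * Sb + (1 + r) * Se.
  rewrite /Sb /Se !mulr_sumr -big_split /=; apply: ler_sum => j _; exact: young_sqr.
have Sb_le : Sb <= E * (r ^+ 2 * M) * D.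
  apply: (@le_trans _ _ (noise_energy ks)).
    by rewrite -lee_fin (le_trans (sumsq_le_tail _ _ _)).
  have /andP[_ N_hi] := noise_energy_bounds ks3; apply: le_trans N_hi _.
  by rewrite /E /D /M ler_wpM2r ?sqr_ge0 // ler_wpM2l // addr_ge0.
have Se_le : Se <= E * M * D.
  have /andP[_ N_hi] := noise_energy_bounds (leq_trans ks3 (leq_mul (leqnn 3) ksm)).
  by apply: le_trans N_hi; apply: sumsq_widen.
have weights : (1 + r^-1) * (E * (r ^+ 2 * M) * D) + (1 + r) * (E * M * D)
    = E * (1 + r) ^+ 2 * (M * D) by field; rewrite gt_eqF.
have E_le : E * (1 + r) ^+ 2 <= tau ^+ 2 by rewrite -r_id ler_wpM2r // sqr_ge0.
apply: (le_trans young_split).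
apply: le_trans (lerD (ler_wpM2l _ Sb_le) (ler_wpM2l _ Se_le)) _.
- by rewrite addr_ge0 // invr_ge0 ltW.
- by rewrite addr_ge0 // ltW.
rewrite weights (_ : (tau * delta) ^+ 2 * M = tau ^+ 2 * (M * D)).
  by rewrite ler_wpM2r // mulr_ge0.
by rewrite /D /M; ring.
Qed.

Lemma kdp_m_le_oracle (ks m : nat) :
  (tail b ks <= (noise_energy ks)%:E)%E -> (kappa <= 3 * ks)%N -> (ks <= m)%N ->
  ks%:R <= r ^+ 2 * m%:R -> (kdp_m (ydelta sigma xc delta z) tau delta m <= ks)%N.
Proof.
move=> tail_ks ks3 ksm ks_le; apply: kdp_m_le => //.
have tau_ge0 : 0 <= tau by rewrite ltW // (lt_trans ltr01).
rewrite (_ : tau * Num.sqrt m%:R * delta = Num.sqrt ((tau * delta) ^+ 2 * m%:R)).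
  rewrite ler_sqrt; last by rewrite mulr_ge0 // sqr_ge0.
  exact (residual_below_threshold tail_ks ks3 ksm ks_le).
have td_ge0 : 0 <= tau * delta by rewrite mulr_ge0 // ltW.
by rewrite sqrtrM ?sqr_ge0 // sqrtr_sqr ger0_norm // mulrAC.
Qed.

Lemma kdp_le_A_tau (ks : nat) : (tail b ks <= (noise_energy ks)%:E)%E ->
  (kdp (ydelta sigma xc delta z) tau delta <= (A_tau tau * ks%:R)%:E)%E.
Proof.
move=> tail_ks; have ks3 := oracle_index_large tail_ks.
have [_ A_r _] := young_weight_identities tau_gt1.
have A_ge1 := A_tau_ge1 tau_gt1.
apply: ge_ereal_sup => _ [m _ <-]; rewrite lee_fin.
have [Aks_lt|m_le] := ltP (A_tau tau * ks%:R) m%:R; last first.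
  apply: le_trans m_le; rewrite ler_nat; apply: kdp_m_le_m.
  by rewrite !mulr_ge0 ?sqrtr_ge0 ?ltW // (lt_trans ltr01).
have ks_le : ks%:R <= A_tau tau * ks%:R :> R by rewrite ler_peMl.
have ksm : (ks <= m)%N by rewrite -(ler_nat R) ltW // (le_lt_trans ks_le).
apply: le_trans ks_le; rewrite ler_nat; apply: kdp_m_le_oracle => //.
have -> : ks%:R = r ^+ 2 * (A_tau tau * ks%:R).
  by rewrite mulrA [r ^+ 2 * _]mulrC A_r mul1r.
by rewrite ler_wpM2l ?sqr_ge0 // ltW.
Qed.

End OneRealization.

Unset Implicit Arguments.

Theorem mainTheorem11 (R : realType)
  (sigma : nat -> R)                 (* singular values sigma_1 >= sigma_2 >= ... > 0 *)
  (xc : nat -> R)                    (* coefficients (x^dagger, v_j) *)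
  (Omega0 : Type) (Z : Omega0 -> nat -> R)  (* (Z, u_j) as real random variables *)
  (delta tau : R) (kappa : nat) :
  (forall j, (1 <= j)%N -> 0 < sigma j) ->
  (forall j, (1 <= j)%N -> sigma j.+1 <= sigma j) ->
  sigma n @[n --> \oo] --> (0 : R) ->                           (* K compact *)
  (\sum_(1 <= j <oo) ((xc j) ^+ 2)%:E < +oo)%E ->       (* x^dagger in X *)
  0 < delta -> 1 < tau -> (3 <= kappa)%N ->
  ((kappa%:R)%:E <= kpr_bar sigma xc delta)%E ->
  forall omega : Omega0, Omega tau delta kappa (Z omega) ->
    (kpr sigma xc delta (Z omega) < +oo)%E /\
    (kdp (ydelta sigma xc delta (Z omega)) tau delta
       <= (A_tau tau)%:E * kpr sigma xc delta (Z omega))%E /\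
    (kdp (ydelta sigma xc delta (Z omega)) tau delta < +oo)%E.
Proof.
move=> sigma_gt0 sigma_noninc _ xc_fin delta_gt0 tau_gt1 kappa_ge3 kappa_le.
move=> omega on_Omega.
have [C tail0_le] := tail_ydag_bounded sigma_gt0 sigma_noninc xc_fin.
have ex_ks := tail_below_noise_exists delta_gt0 tau_gt1 on_Omega tail0_le.
have [ks tail_ks ks_min] := ex_minnP ex_ks.
have kprE : kpr sigma xc delta (Z omega) = (ks%:R)%:E.
  by apply: ereal_inf_nat_min; [exact: tail_ks | exact: ks_min].
have kdp_le := kdp_le_A_tau delta_gt0 tau_gt1 kappa_ge3 kappa_le on_Omega tail_ks.
rewrite kprE -EFinM; split; first exact: ltey.
by split=> //; apply: le_lt_trans kdp_le (ltey _).
Qed.
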